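(* There exist Archimedean vector lattices $X,Y$ and a disjointness preserving linear operator $T:X\to Y$ that does not satisfy condition $(\beta)$.
   Context: For a subset $A$ of a vector lattice $X$, $A^d=\{x\in X: |x|\wedge|a|=0 \text{ for all } a\in A\}$ and $A^{dd}=(A^d)^d$. For $a,b\in X$ we write $a\lhd b$ if $\{a\}^{dd}\subseteq\{b\}^{dd}$. A linear operator $T:X\to Y$ satisfies condition $(\beta)$ if $Ta\lhd Tb$ in $Y$ whenever $a\lhd b$ in $X$. A linear operator is disjointness preserving if it maps disjoint elements to disjoint elements. *)

From Stdlib Require Import Reals.
Open Scope R_scope.

Record VectorLattice := {
  vl_carrier :> Type;
  vzero : vl_carrier;
  vadd : vl_carrier -> vl_carrier -> vl_carrier;
  vopp : vl_carrier -> vl_carrier;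
  vscal : R -> vl_carrier -> vl_carrier;
  vle : vl_carrier -> vl_carrier -> Prop;
  vsup : vl_carrier -> vl_carrier -> vl_carrier;
  vinf : vl_carrier -> vl_carrier -> vl_carrier;
  vaddA : forall x y z, vadd x (vadd y z) = vadd (vadd x y) z;
  vaddC : forall x y, vadd x y = vadd y x;
  vadd0 : forall x, vadd vzero x = x;
  vaddN : forall x, vadd x (vopp x) = vzero;
  vscal_addv : forall a x y, vscal a (vadd x y) = vadd (vscal a x) (vscal a y);
  vscal_adds : forall a b x, vscal (a + b) x = vadd (vscal a x) (vscal b x);
  vscal_mul : forall a b x, vscal (a * b) x = vscal a (vscal b x);
  vscal_one : forall x, vscal 1 x = x;
  vle_refl : forall x, vle x x;
  vle_antisym : forall x y, vle x y -> vle y x -> x = y;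
  vle_trans : forall x y z, vle x y -> vle y z -> vle x z;
  vle_add : forall x y z, vle x y -> vle (vadd x z) (vadd y z);
  vle_scal : forall a x y, 0 <= a -> vle x y -> vle (vscal a x) (vscal a y);
  vsup_l : forall x y, vle x (vsup x y);
  vsup_r : forall x y, vle y (vsup x y);
  vsup_least : forall x y z, vle x z -> vle y z -> vle (vsup x y) z;
  vinf_l : forall x y, vle (vinf x y) x;
  vinf_r : forall x y, vle (vinf x y) y;
  vinf_greatest : forall x y z, vle z x -> vle z y -> vle z (vinf x y)
}.

Arguments vzero {v}.
Arguments vadd {v}.
Arguments vopp {v}.
Arguments vscal {v}.
Arguments vle {v}.
Arguments vsup {v}.
Arguments vinf {v}.

Definition vabs {X : VectorLattice} (x : X) : X := vsup x (vopp x).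

Definition archimedean (X : VectorLattice) : Prop :=
  forall x y : X, vle vzero x -> (forall n : nat, vle (vscal (INR n) x) y) -> x = vzero.

Definition disjoint {X : VectorLattice} (x y : X) : Prop :=
  vinf (vabs x) (vabs y) = vzero.

Definition dcompl {X : VectorLattice} (A : X -> Prop) : X -> Prop :=
  fun x => forall a, A a -> disjoint x a.

Definition band_gen {X : VectorLattice} (a : X) : X -> Prop :=
  dcompl (dcompl (fun z => z = a)).

Definition lhd {X : VectorLattice} (a b : X) : Prop :=
  forall x, band_gen a x -> band_gen b x.

Definition linear_op {X Y : VectorLattice} (T : X -> Y) : Prop :=
  (forall x y, T (vadd x y) = vadd (T x) (T y)) /\
  (forall (c : R) x, T (vscal c x) = vscal c (T x)).

Definition disjointness_preserving {X Y : VectorLattice} (T : X -> Y) : Prop :=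
  forall x y, disjoint x y -> disjoint (T x) (T y).

Definition condition_beta {X Y : VectorLattice} (T : X -> Y) : Prop :=
  forall a b, lhd a b -> lhd (T a) (T b).

(* The limit functional on the space c of convergent real sequences is a lattice
   homomorphism c -> R, hence disjointness preserving.  The sequence b = (2^-n)
   has no zero term, so only 0 is disjoint from it and {b}^dd is all of c; in
   particular 1 <| b.  But lim b = 0, {0}^dd = {0}, and lim 1 = 1 is not in it,
   so condition (beta) fails. *)
From Stdlib Require Import Reals Lra Lia ProofIrrelevance FunctionalExtensionality.
Open Scope R_scope.

Section VectorLatticeFacts.

Variable X : VectorLattice.
Implicit Types x y z : X.

Lemma vopp_zero : vopp (vzero : X) = vzero.
Proof. rewrite <- (vadd0 X (vopp vzero)); apply vaddN. Qed.

Lemma vadd_idem_eq0 y : vadd y y = y -> y = vzero.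
Proof.
  intro Hyy.
  rewrite <- (vaddN X y).
  rewrite <- Hyy at 2.
  now rewrite <- vaddA, vaddN, vaddC, vadd0.
Qed.

Lemma vscal_zero a : vscal a (vzero : X) = vzero.
Proof.
  apply vadd_idem_eq0.
  now rewrite <- vscal_addv, vadd0.
Qed.

Lemma vabs_zero : vabs (vzero : X) = vzero.
Proof.
  unfold vabs; rewrite vopp_zero.
  apply vle_antisym; [apply vsup_least; apply vle_refl | apply vsup_l].
Qed.

Lemma vabs_ge0 x : vle vzero (vabs x).
Proof.
  set (s := vabs x).
  (* 0 = x - x <= s - x <= s + s, then halve. *)
  assert (Hss : vle vzero (vadd s s)).
  { apply vle_trans with (vadd s (vopp x)).
    - rewrite <- (vaddN X x). apply vle_add, vsup_l.
    - rewrite (vaddC X s (vopp x)). apply vle_add, vsup_r. }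
  assert (Hhalf : vscal (/ 2) (vadd s s) = s).
  { rewrite <- (vscal_one X s) at 1 2.
    rewrite <- vscal_adds, <- vscal_mul.
    replace (/ 2 * (1 + 1)) with 1 by field. apply vscal_one. }
  rewrite <- Hhalf, <- (vscal_zero (/ 2)).
  apply vle_scal; [lra | exact Hss].
Qed.

Lemma vabs_eq0 x : vabs x = vzero -> x = vzero.
Proof.
  intro H0.
  apply vle_antisym.
  - rewrite <- H0; apply vsup_l.
  - assert (Hnx : vle (vopp x) vzero) by (rewrite <- H0; apply vsup_r).
    apply (vle_add X _ _ x) in Hnx.
    now rewrite vaddC, vaddN, vadd0 in Hnx.
Qed.

Lemma vinf_comm x y : vinf x y = vinf y x.
Proof.
  apply vle_antisym; apply vinf_greatest; first [apply vinf_l | apply vinf_r].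
Qed.

Lemma disjoint_sym x y : disjoint x y -> disjoint y x.
Proof. unfold disjoint; now rewrite vinf_comm. Qed.

Lemma disjoint_zero_r x : disjoint x vzero.
Proof.
  unfold disjoint; rewrite vabs_zero.
  apply vle_antisym; [apply vinf_r |].
  apply vinf_greatest; [apply vabs_ge0 | apply vle_refl].
Qed.

Lemma disjoint_self_eq0 x : disjoint x x -> x = vzero.
Proof.
  unfold disjoint; intro Hxx; apply vabs_eq0.
  rewrite <- Hxx.
  apply vle_antisym; [apply vinf_greatest; apply vle_refl | apply vinf_l].
Qed.

Lemma band_gen_self x : band_gen x x.
Proof. intros z Hz; apply disjoint_sym, Hz; reflexivity. Qed.

Lemma band_gen_zero x : band_gen vzero x -> x = vzero.
Proof.
  intro Hx; apply disjoint_self_eq0, Hx.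
  intros a ->; apply disjoint_zero_r.
Qed.

Lemma band_gen_of_dcompl_trivial b :
  (forall z, disjoint z b -> z = vzero) -> forall x, band_gen b x.
Proof.
  intros Hb x a Ha.
  rewrite (Hb a (Ha b eq_refl)); apply disjoint_zero_r.
Qed.

End VectorLatticeFacts.

Lemma lattice_hom_disjointness_preserving {X Y : VectorLattice} (T : X -> Y) :
  T vzero = vzero ->
  (forall x y, T (vinf x y) = vinf (T x) (T y)) ->
  (forall x, T (vabs x) = vabs (T x)) ->
  disjointness_preserving T.
Proof.
  intros T0 Tinf Tabs x y Hxy; unfold disjoint in *.
  now rewrite <- !Tabs, <- Tinf, Hxy.
Qed.

Lemma not_condition_beta_of_kernel {X Y : VectorLattice} (T : X -> Y) a b :
  lhd a b -> T b = vzero -> T a <> vzero -> ~ condition_beta T.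
Proof.
  intros Hab Tb Ta Hbeta; apply Ta, band_gen_zero.
  rewrite <- Tb; apply (Hbeta a b Hab), band_gen_self.
Qed.

Lemma Rmax_opp_Rabs x : Rmax x (- x) = Rabs x.
Proof. unfold Rmax, Rabs; destruct Rle_dec, Rcase_abs; lra. Qed.

Lemma Rmax_dist a b c d :
  Rabs (Rmax a b - Rmax c d) <= Rmax (Rabs (a - c)) (Rabs (b - d)).
Proof. unfold Rmax, Rabs; repeat (destruct Rle_dec || destruct Rcase_abs); lra. Qed.

Lemma Rmin_dist a b c d :
  Rabs (Rmin a b - Rmin c d) <= Rmax (Rabs (a - c)) (Rabs (b - d)).
Proof. unfold Rmin, Rmax, Rabs; repeat (destruct Rle_dec || destruct Rcase_abs); lra. Qed.

Lemma CV_const (a : R) : Un_cv (fun _ => a) a.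
Proof.
  intros e He; exists 0%nat; intros.
  unfold R_dist; rewrite Rminus_diag, Rabs_R0; lra.
Qed.

Lemma CV_of_dist_bound (op : R -> R -> R) f g L M :
  (forall a b c d, Rabs (op a b - op c d) <= Rmax (Rabs (a - c)) (Rabs (b - d))) ->
  Un_cv f L -> Un_cv g M -> Un_cv (fun n => op (f n) (g n)) (op L M).
Proof.
  intros Hop Hf Hg e He.
  destruct (Hf e He) as [N1 H1], (Hg e He) as [N2 H2].
  exists (max N1 N2); intros n Hn; unfold R_dist in *.
  eapply Rle_lt_trans; [apply Hop |].
  apply Rmax_lub_lt; [apply H1 | apply H2]; lia.
Qed.

Lemma R_archimedean_le (x y : R) :
  0 <= x -> (forall n : nat, INR n * x <= y) -> x = 0.
Proof.
  intros Hx Hy; destruct (Req_dec x 0) as [| Hne]; [assumption |].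
  destruct (INR_unbounded (y / x)) as [n Hn].
  assert (Hlt : y / x * x < INR n * x) by (apply Rmult_lt_compat_r; lra).
  replace (y / x * x) with y in Hlt by (field; lra).
  specialize (Hy n); lra.
Qed.

Definition R_lattice : VectorLattice.
Proof.
  refine (Build_VectorLattice R 0 Rplus Ropp Rmult Rle Rmax Rmin
    _ _ _ _ _ _ _ _ _ _ _ _ _ _ _ _ _ _ _); intros;
  first [ ring | lra | apply Rmax_l | apply Rmax_r | apply Rmin_l | apply Rmin_r
        | now apply Rmax_lub | now apply Rmin_glb | now apply Rmult_le_compat_l ].
Defined.

Lemma archimedean_R_lattice : archimedean R_lattice.
Proof. exact R_archimedean_le. Qed.

Record ConvSeq := { cs_seq : nat -> R; cs_lim : R; cs_cv : Un_cv cs_seq cs_lim }.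

Lemma ConvSeq_ext (p q : ConvSeq) : (forall n, cs_seq p n = cs_seq q n) -> p = q.
Proof.
  destruct p as [f L Hf], q as [g M Hg]; simpl; intro Efg.
  assert (f = g) by (apply functional_extensionality; exact Efg); subst g.
  assert (L = M) by (eapply UL_sequence; eauto); subst M.
  f_equal; apply proof_irrelevance.
Qed.

Definition cs_const (a : R) : ConvSeq := Build_ConvSeq _ a (CV_const a).
Definition cs_add (p q : ConvSeq) : ConvSeq :=
  Build_ConvSeq _ _ (CV_plus _ _ _ _ (cs_cv p) (cs_cv q)).
Definition cs_opp (p : ConvSeq) : ConvSeq := Build_ConvSeq _ _ (CV_opp _ _ (cs_cv p)).
Definition cs_scal (a : R) (p : ConvSeq) : ConvSeq :=
  Build_ConvSeq _ _ (CV_mult _ _ _ _ (CV_const a) (cs_cv p)).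
Definition cs_sup (p q : ConvSeq) : ConvSeq :=
  Build_ConvSeq _ _ (CV_of_dist_bound Rmax _ _ _ _ Rmax_dist (cs_cv p) (cs_cv q)).
Definition cs_inf (p q : ConvSeq) : ConvSeq :=
  Build_ConvSeq _ _ (CV_of_dist_bound Rmin _ _ _ _ Rmin_dist (cs_cv p) (cs_cv q)).
Definition cs_le (p q : ConvSeq) : Prop := forall n, cs_seq p n <= cs_seq q n.

Definition conv_seq_lattice : VectorLattice.
Proof.
  refine (Build_VectorLattice ConvSeq (cs_const 0) cs_add cs_opp cs_scal cs_le
    cs_sup cs_inf _ _ _ _ _ _ _ _ _ _ _ _ _ _ _ _ _ _ _);
  unfold cs_le; intros; simpl in *;
  solve [ apply ConvSeq_ext; intros; simpl; unfold opp_seq; ring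
        | apply ConvSeq_ext; intros; apply Rle_antisym; auto
        | apply Rle_refl | eauto using Rle_trans
        | apply Rplus_le_compat_r; auto | apply Rmult_le_compat_l; auto
        | apply Rmax_l | apply Rmax_r | apply Rmin_l | apply Rmin_r
        | apply Rmax_lub; auto | apply Rmin_glb; auto ].
Defined.

Lemma archimedean_conv_seq_lattice : archimedean conv_seq_lattice.
Proof.
  intros x y Hx Hy; apply ConvSeq_ext; intro n; simpl.
  apply (R_archimedean_le _ (cs_seq y n)); [apply Hx |].
  intro m; apply (Hy m).
Qed.

Lemma conv_seq_disjoint_nonvanishing (b z : conv_seq_lattice) :
  (forall n, cs_seq b n <> 0) -> disjoint z b -> z = vzero.
Proof.
  intros Hb Hzb; apply ConvSeq_ext; intro n.
  apply (f_equal (fun p : conv_seq_lattice => cs_seq p n)) in Hzb; simpl in Hzb.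
  rewrite !Rmax_opp_Rabs in Hzb.
  specialize (Hb n); simpl.
  pose proof (Rabs_pos_lt _ Hb); pose proof (Rabs_pos (cs_seq z n)).
  assert (Habs : Rabs (cs_seq z n) = 0) by (unfold Rmin in Hzb; destruct Rle_dec; lra).
  destruct (Req_dec (cs_seq z n) 0) as [| Hne]; [assumption | now apply Rabs_no_R0 in Hne].
Qed.

Definition cs_pow_half : conv_seq_lattice := Build_ConvSeq _ _ (cv_pow_half 1).

Lemma cs_pow_half_nonvanishing n : cs_seq cs_pow_half n <> 0.
Proof.
  simpl; apply Rgt_not_eq, Rdiv_lt_0_compat; [lra | apply pow_lt; lra].
Qed.

Theorem mainTheorem5 :
  exists (X Y : VectorLattice) (T : X -> Y),
    archimedean X /\ archimedean Y /\ linear_op T /\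
    disjointness_preserving T /\ ~ condition_beta T.
Proof.
  exists conv_seq_lattice, R_lattice, (cs_lim : conv_seq_lattice -> R_lattice).
  split; [exact archimedean_conv_seq_lattice |].
  split; [exact archimedean_R_lattice |].
  split; [split; reflexivity |].
  split; [apply lattice_hom_disjointness_preserving; reflexivity |].
  apply (not_condition_beta_of_kernel _ (cs_const 1 : conv_seq_lattice) cs_pow_half).
  - intros x _; apply band_gen_of_dcompl_trivial.
    intros z; apply conv_seq_disjoint_nonvanishing, cs_pow_half_nonvanishing.
  - reflexivity.
  - simpl; lra.
Qed.
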